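(* For all integers $n>1$ and $k>n$ we have $3F(n,k)\le2F(n,k+1)$, with equality if and only if $n=2$ and $k=4$.
   Context: For positive integers $n,k$, the generalized Fibonacci numbers are defined by $F(n,k)=0$ if $1\le k<n$, $F(n,k)=1$ if $k=n$, and $F(n,k)=\sum_{j=1}^nF(n,k-j)$ if $k>n$. *)

From mathcomp Require Import all_boot.
Set Implicit Arguments. Unset Strict Implicit. Unset Printing Implicit Defensive.

(* We compute the list [F n 0; F n 1; ...; F n k] by structural recursion
   (the value at k = 0 is irrelevant to the paper and set to 0; it is never
   used by the recurrence since k > n implies k - j >= 1 for j <= n). *)
Fixpoint genfib_list (n k : nat) : seq nat :=
  match k with
  | 0 => [:: 0]
  | k'.+1 =>
      let s := genfib_list n k' in
      let v := if k'.+1 < n then 0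
               else if k'.+1 == n then 1
               else \sum_(1 <= j < n.+1) nth 0 s (k'.+1 - j) in
      rcons s v
  end.

Definition F (n k : nat) : nat := nth 0 (genfib_list n k) k.

Example F_2_check : [seq F 2 k | k <- iota 1 8] = [:: 0; 1; 1; 2; 3; 5; 8; 13].
Proof. by rewrite /F /= unlock. Qed.
Example F_3_check : [seq F 3 k | k <- iota 1 8] = [:: 0; 0; 1; 1; 2; 4; 7; 13].
Proof. by rewrite /F /= unlock. Qed.

From mathcomp Require Import all_boot.
From mathcomp Require Import zify.

Set Implicit Arguments.
Unset Strict Implicit.

(* For n < k the two recurrences for F(k+1) and F(k) share n - 1 terms, so
   F(k+1) = 2 F(k) - F(k-n), and 3 F(k) <= 2 F(k+1) becomes 2 F(k-n) <= F(k).
   Since F is nondecreasing on positive indices, each of the n summands of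
   F(k) is at least F(k-n), whence F(k) >= n F(k-n) >= 2 F(k-n).  Equality
   forces F(k-n) = 0 (hence F(k) = 0, impossible) unless n = 2, and for the
   Fibonacci numbers F(k) = 2 F(k-2) means F(k-3) = 0, i.e. k = 4. *)

Lemma size_genfib_list n k : size (genfib_list n k) = k.+1.
Proof. by elim: k => [|k IHk] //=; rewrite size_rcons IHk. Qed.

Lemma nth_genfib_list n k i : i <= k -> nth 0 (genfib_list n k) i = F n i.
Proof.
elim: k => [|k IHk] le_ik; first by move: le_ik; rewrite leqn0 => /eqP ->.
case: (ltngtP i k.+1) => [lt_ik | | -> //]; last by rewrite ltnNge le_ik.
by rewrite [genfib_list n k.+1]/= nth_rcons size_genfib_list lt_ik IHk.
Qed.

Lemma F_rec n k : 0 < k ->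
  F n k = if k < n then 0 else if k == n then 1
          else \sum_(1 <= j < n.+1) F n (k - j).
Proof.
case: k => [//|k] _.
rewrite /F [genfib_list n k.+1]/= nth_rcons size_genfib_list ltnn eqxx.
do 2!case: ifP => // _.
by apply: eq_big_nat => j /andP[j_gt0 _]; rewrite nth_genfib_list //; lia.
Qed.

Lemma F_lt n k : k < n -> F n k = 0.
Proof. by case: k => [//|k] lt_kn; rewrite F_rec // lt_kn. Qed.

Lemma F_diag n : 0 < n -> F n n = 1.
Proof. by move=> n_gt0; rewrite F_rec // ltnn eqxx. Qed.

Lemma F_gt n k : n < k -> F n k = \sum_(1 <= j < n.+1) F n (k - j).
Proof.
move=> lt_nk; rewrite F_rec; last exact: leq_ltn_trans lt_nk.
by rewrite ltnNge (ltnW lt_nk) gtn_eqF.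
Qed.

Lemma F_succ n k : 0 < n -> n < k -> F n k.+1 + F n (k - n) = 2 * F n k.
Proof.
move=> n_gt0 lt_nk.
have Fk : F n k = \sum_(1 <= j < n) F n (k - j) + F n (k - n).
  by rewrite (F_gt lt_nk) big_nat_recr.
rewrite (F_gt (ltnW lt_nk : n < k.+1)) big_nat_recl // subn1 succnK.
under eq_bigr do rewrite subSS.
lia.
Qed.

Lemma F_le_succ n k : 0 < n -> 0 < k -> F n k <= F n k.+1.
Proof.
move=> n_gt0 k_gt0; case: (leqP n k) => [le_nk | lt_kn]; last by rewrite F_lt.
by rewrite (F_gt (le_nk : n < k.+1)) big_nat_recl // subn1 leq_addr.
Qed.

Lemma F_mono n a b : 0 < n -> 0 < a -> a <= b -> F n a <= F n b.
Proof.
move=> n_gt0 a_gt0 /subnK <-; elim: (b - a) => [//|d IHd].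
by apply: leq_trans IHd (F_le_succ _ _) => //; rewrite addn_gt0 a_gt0 orbT.
Qed.

Lemma F_gt0 n k : 0 < n -> n <= k -> 0 < F n k.
Proof. by move=> n_gt0 le_nk; rewrite -(F_diag n_gt0) F_mono. Qed.

Lemma F_ge_mul n k : 0 < n -> n < k -> n * F n (k - n) <= F n k.
Proof.
move=> n_gt0 lt_nk; rewrite (F_gt lt_nk).
have -> : n * F n (k - n) = \sum_(1 <= j < n.+1) F n (k - n).
  by rewrite sum_nat_const_nat subn1.
rewrite big_nat_cond [leqRHS]big_nat_cond.
by apply: leq_sum => j /andP[/andP[_ lt_jn] _]; apply: F_mono => //; lia.
Qed.

Lemma Fib_rec k : 0 < k -> F 2 k.+2 = F 2 k.+1 + F 2 k.
Proof.
by move=> k_gt0; rewrite F_gt // big_nat_recl // big_nat1 !subSS !subn0.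
Qed.

Lemma Fib_eq_double k : 2 < k -> F 2 k = 2 * F 2 (k - 2) <-> k = 4.
Proof.
case: k => [|[|[|[|[|m]]]]] //= _; try by rewrite /F /= unlock.
split=> // Fm; exfalso.
have Fm2_gt0 : 0 < F 2 m.+2 by apply: F_gt0.
by move: Fm; rewrite subn2 /= (@Fib_rec m.+3) // (@Fib_rec m.+2) //; lia.
Qed.

Lemma F_eq_double n k : 1 < n -> n < k ->
  F n k = 2 * F n (k - n) <-> n = 2 /\ k = 4.
Proof.
move=> n_gt1 lt_nk; have n_gt0 := ltnW n_gt1.
have Fk_gt0 : 0 < F n k by apply/F_gt0/ltnW.
have ge_mul := F_ge_mul n_gt0 lt_nk.
case: (ltngtP n 2) => [| n_gt2 | n2]; first lia.
- split=> [Fk | [n2]]; last by rewrite n2 in n_gt2.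
  have le_3F : 3 * F n (k - n) <= n * F n (k - n).
    by rewrite leq_mul2r n_gt2 orbT.
  lia.
- subst n; rewrite Fib_eq_double //; lia.
Qed.

Theorem mainTheorem16 (n k : nat) :
  1 < n -> n < k ->
  3 * F n k <= 2 * F n k.+1 /\ (3 * F n k = 2 * F n k.+1 <-> n = 2 /\ k = 4).
Proof.
move=> n_gt1 lt_nk; have n_gt0 := ltnW n_gt1.
have succ := F_succ n_gt0 lt_nk.
have le_double : 2 * F n (k - n) <= F n k.
  by apply: leq_trans (F_ge_mul n_gt0 lt_nk); rewrite leq_mul2r n_gt1 orbT.
split; first lia.
rewrite -(F_eq_double n_gt1 lt_nk); lia.
Qed.
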